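(* There is no embedding $\mathcal{B}^X \hookrightarrow \mathcal{K}_2^X$ for any $X \subseteq \omega$.
   Context: A partial combinatory algebra (pca) is a set $A$ with a partial binary application $\cdot$ containing distinct elements $\mathrm{s},\mathrm{k}$ with $\mathrm{k}ab\downarrow = a$, $\mathrm{s}ab\downarrow$, and $\mathrm{s}abc \simeq (ac)(bc)$. Given pcas $\mathcal{A},\mathcal{B}$, an embedding $\mathcal{A}\hookrightarrow\mathcal{B}$ is an injection $f$ such that whenever $aa'\downarrow$ in $\mathcal{A}$, $f(a)f(a')\downarrow = f(aa')$. Kleene's second model $\mathcal{K}_2$ is taken with carrier $\omega^\omega$ and application $g\cdot h = \Phi^{g\oplus h}_{g(0)}$, where $\Phi_e$ is the $e$-th Turing functional and $g\cdot h$ is defined iff the function on the right is total. Van Oosten's sequential computation model $\mathcal{B}$ is the same definition but with carrier the set of partial functions $\omega\rightharpoonup\omega$ (application always defined). For $X\subseteq\omega$, $\mathcal{K}_2^X$ is the sub-pca of $X$-computable total functions and $\mathcal{B}^X$ the sub-pca of partial $X$-computable functions. *)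

From HB Require Import structures.
From mathcomp Require Import all_boot.

Set Implicit Arguments.
Unset Strict Implicit.
Unset Printing Implicit Defensive.

Definition pfun := nat -> option nat.

Definition cpair (x y : nat) : nat := ((x + y) * (x + y).+1)./2 + y.

Fixpoint cunpair (z : nat) : nat * nat :=
  match z with
  | 0 => (0, 0)
  | z'.+1 => let: (x, y) := cunpair z' in
             if x is x'.+1 then (x', y.+1) else (y.+1, 0)
  end.

(* Unary oracle programs: a standard basis for the unary partial
   recursive functionals (with Cantor pairing). *)
Inductive prog : Type :=
| PZero | PSucc | PId | PFst | PSnd | POrc
| PComp of prog & prog     (* PComp f g = f o g *)
| PPair of prog & prog
| PPrec of prog & prog
| PMu of prog.

Fixpoint prog_to_tree (p : prog) : GenTree.tree nat :=
  match p with
  | PZero => GenTree.Node 0 [::]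
  | PSucc => GenTree.Node 1 [::]
  | PId => GenTree.Node 2 [::]
  | PFst => GenTree.Node 3 [::]
  | PSnd => GenTree.Node 4 [::]
  | POrc => GenTree.Node 5 [::]
  | PComp f g => GenTree.Node 6 [:: prog_to_tree f; prog_to_tree g]
  | PPair f g => GenTree.Node 7 [:: prog_to_tree f; prog_to_tree g]
  | PPrec f g => GenTree.Node 8 [:: prog_to_tree f; prog_to_tree g]
  | PMu f => GenTree.Node 9 [:: prog_to_tree f]
  end.

Fixpoint tree_to_prog (t : GenTree.tree nat) : option prog :=
  match t with
  | GenTree.Node 0 [::] => Some PZero
  | GenTree.Node 1 [::] => Some PSucc
  | GenTree.Node 2 [::] => Some PId
  | GenTree.Node 3 [::] => Some PFst
  | GenTree.Node 4 [::] => Some PSnd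
  | GenTree.Node 5 [::] => Some POrc
  | GenTree.Node 6 [:: t1; t2] =>
      if tree_to_prog t1 is Some f then
        if tree_to_prog t2 is Some g then Some (PComp f g) else None else None
  | GenTree.Node 7 [:: t1; t2] =>
      if tree_to_prog t1 is Some f then
        if tree_to_prog t2 is Some g then Some (PPair f g) else None else None
  | GenTree.Node 8 [:: t1; t2] =>
      if tree_to_prog t1 is Some f then
        if tree_to_prog t2 is Some g then Some (PPrec f g) else None else None
  | GenTree.Node 9 [:: t1] =>
      if tree_to_prog t1 is Some f then Some (PMu f) else None
  | _ => None
  end.

Lemma prog_treeK : pcancel prog_to_tree tree_to_prog.
Proof. by elim=> //= [f -> g ->|f -> g ->|f -> g ->|f ->]. Qed.

HB.instance Definition _ := Equality.copy prog (pcan_type prog_treeK).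
HB.instance Definition _ := Countable.copy prog (pcan_type prog_treeK).

(* A query to the oracle at a point where f is undefined diverges. *)
Inductive eval (f : pfun) : prog -> nat -> nat -> Prop :=
| EZero x : eval f PZero x 0
| ESucc x : eval f PSucc x x.+1
| EId x : eval f PId x x
| EFst z : eval f PFst z (cunpair z).1
| ESnd z : eval f PSnd z (cunpair z).2
| EOrc x v : f x = Some v -> eval f POrc x v
| EComp p q x y v : eval f q x y -> eval f p y v -> eval f (PComp p q) x v
| EPair p q x a b : eval f p x a -> eval f q x b -> eval f (PPair p q) x (cpair a b)
| EPrec0 p q x v : eval f p x v -> eval f (PPrec p q) (cpair x 0) v
| EPrecS p q x y w v : eval f (PPrec p q) (cpair x y) w ->
    eval f q (cpair x (cpair y w)) v -> eval f (PPrec p q) (cpair x y.+1) v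
| EMu p x y : eval f p (cpair x y) 0 ->
    (forall z, z < y -> exists w, eval f p (cpair x z) w.+1) ->
    eval f (PMu p) x y.

(* The e-th Turing functional: Phi e f n v  <->  Phi_e^f(n) converges to v.
   Indices not coding a program give the nowhere-defined functional. *)
Definition Phi (e : nat) (f : pfun) (n v : nat) : Prop :=
  exists p : prog, unpickle e = Some p /\ eval f p n v.

Definition pjoin (g h : pfun) : pfun :=
  fun n => if odd n then h n./2 else g n./2.

Definition chi (X : nat -> bool) : pfun := fun n => Some (nat_of_bool (X n)).

(* Partial X-computable functions (carrier of B^X). *)
Definition pcomputable (X : nat -> bool) (a : pfun) : Prop :=
  exists e, forall n v, a n = Some v <-> Phi e (chi X) n v.

(* Total X-computable functions (carrier of K_2^X). *)
Definition tcomputable (X : nat -> bool) (g : nat -> nat) : Prop :=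
  exists e, forall n, Phi e (chi X) n (g n).

(* Application in B: (a . b) = Phi_{a(0)}^{a (+) b}  (empty if a(0) undefined).
   Bapp a b c  <->  a . b = c. *)
Definition Bapp (a b c : pfun) : Prop :=
  forall n v, c n = Some v <-> exists e, a 0 = Some e /\ Phi e (pjoin a b) n v.

(* Application in K_2: K2app g h k <-> g . h is defined and equals k. *)
Definition K2app (g h k : nat -> nat) : Prop :=
  forall n, Phi (g 0) (pjoin (fun m => Some (g m)) (fun m => Some (h m))) n (k n).

(* Let F embed B^X into K_2^X. The element [hdiag X] of B^X maps the constant
   function e to the constant 0 if the universal program (relative to X)
   outputs 0 on <e, e>, and to the nowhere defined function otherwise; F must
   separate these two values at some argument m. Since F commutes with
   application and application in K_2 is relative computation, the images
   F(const e) are uniformly X-computable (iterate F(succ_const) . _ from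
   F(const 0)), hence so is e |-> F(hdiag X . const e)(m). Comparing this value
   with F(const 0)(m) X-decides {e | U(e, e) = 0}, which the diagonal argument
   forbids. The uniformity is obtained by computing the codes of programs in
   which a program is substituted for the oracle. *)

From mathcomp Require Import all_boot.
From Stdlib Require Import Classical FunctionalExtensionality.

Set Implicit Arguments.
Unset Strict Implicit.
Unset Printing Implicit Defensive.

(** * Cantor pairing *)

Lemma half_mulSS d : (d.+1 * d.+2)./2 = (d * d.+1)./2 + d.+1.
Proof.
have -> : d.+1 * d.+2 = d * d.+1 + d.+1.*2 by rewrite -muln2 [d * _]mulnC -mulnDr addn2.
by rewrite halfD odd_double andbF doubleK.
Qed.

Lemma cpairS x y : cpair x y.+1 = (cpair x.+1 y).+1.
Proof. by rewrite /cpair addSn !addnS. Qed.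

Lemma cpair0S y : cpair y.+1 0 = (cpair 0 y).+1.
Proof. by rewrite /cpair add0n !addn0 half_mulSS addnS. Qed.

Lemma cpairK x y : cunpair (cpair x y) = (x, y).
Proof.
move: {2}(cpair x y) (leqnn (cpair x y)) => n.
elim: n x y => [|n IH] [|x] [|y] //; rewrite ?cpairS ?cpair0S // ltnS => /IH /= -> //.
Qed.

Lemma cpair_inj x y x' y' : cpair x y = cpair x' y' -> x = x' /\ y = y'.
Proof. by move=> E; have := cpairK x y; rewrite E cpairK => -[-> ->]. Qed.

(** * Evaluation *)

(* The generated [eval_ind] has no induction hypothesis under the quantifier
   of [EMu]. *)
Section EvalNestedInd.
Variables (f : pfun) (P : prog -> nat -> nat -> Prop).
Hypotheses
  (PZ : forall x, P PZero x 0)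
  (PS : forall x, P PSucc x x.+1)
  (PI : forall x, P PId x x)
  (PF : forall z, P PFst z (cunpair z).1)
  (PN : forall z, P PSnd z (cunpair z).2)
  (PO : forall x v, f x = Some v -> P POrc x v)
  (PC : forall p q x y v, eval f q x y -> P q x y -> eval f p y v -> P p y v ->
     P (PComp p q) x v)
  (PP : forall p q x a b, eval f p x a -> P p x a -> eval f q x b -> P q x b ->
     P (PPair p q) x (cpair a b))
  (PR0 : forall p q x v, eval f p x v -> P p x v -> P (PPrec p q) (cpair x 0) v)
  (PRS : forall p q x y w v,
     eval f (PPrec p q) (cpair x y) w -> P (PPrec p q) (cpair x y) w ->
     eval f q (cpair x (cpair y w)) v -> P q (cpair x (cpair y w)) v ->
     P (PPrec p q) (cpair x y.+1) v)
  (PM : forall p x y, eval f p (cpair x y) 0 -> P p (cpair x y) 0 ->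
     (forall z, z < y -> exists w, eval f p (cpair x z) w.+1 /\ P p (cpair x z) w.+1) ->
     P (PMu p) x y).

Fixpoint eval_nested_ind p x v (d : eval f p x v) {struct d} : P p x v :=
  match d in eval _ p x v return P p x v with
  | EZero x => PZ x
  | ESucc x => PS x
  | EId x => PI x
  | EFst z => PF z
  | ESnd z => PN z
  | EOrc x v e => PO e
  | EComp p q x y v d1 d2 => PC d1 (eval_nested_ind d1) d2 (eval_nested_ind d2)
  | EPair p q x a b d1 d2 => PP d1 (eval_nested_ind d1) d2 (eval_nested_ind d2)
  | EPrec0 p q x v d1 => PR0 q d1 (eval_nested_ind d1)
  | EPrecS p q x y w v d1 d2 => PRS d1 (eval_nested_ind d1) d2 (eval_nested_ind d2)
  | EMu p x y d1 H => PM d1 (eval_nested_ind d1) (fun z hz =>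
      match H z hz with ex_intro w dw => ex_intro _ w (conj dw (eval_nested_ind dw)) end)
  end.

End EvalNestedInd.

Section EvalInversion.
Variable f : pfun.

Lemma eval_zero_inv x v : eval f PZero x v -> v = 0.
Proof. by move=> H; inversion H. Qed.

Lemma eval_succ_inv x v : eval f PSucc x v -> v = x.+1.
Proof. by move=> H; inversion H. Qed.

Lemma eval_id_inv x v : eval f PId x v -> v = x.
Proof. by move=> H; inversion H. Qed.

Lemma eval_fst_inv x v : eval f PFst x v -> v = (cunpair x).1.
Proof. by move=> H; inversion H. Qed.

Lemma eval_snd_inv x v : eval f PSnd x v -> v = (cunpair x).2.
Proof. by move=> H; inversion H. Qed.

Lemma eval_orc_inv x v : eval f POrc x v -> f x = Some v.
Proof. by move=> H; inversion H. Qed.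

Lemma eval_comp_inv p q x v : eval f (PComp p q) x v ->
  exists y, eval f q x y /\ eval f p y v.
Proof. by move=> H; inversion H; eauto. Qed.

Lemma eval_pair_inv p q x v : eval f (PPair p q) x v ->
  exists a b, [/\ eval f p x a, eval f q x b & v = cpair a b].
Proof. by move=> H; inversion H; do 2 eexists; split; eauto. Qed.

Lemma eval_prec_inv p q x y v : eval f (PPrec p q) (cpair x y) v ->
  if y is y'.+1 then exists w, eval f (PPrec p q) (cpair x y') w /\
                               eval f q (cpair x (cpair y' w)) v
  else eval f p x v.
Proof.
move=> H; inversion H; subst;
  match goal with E : cpair _ _ = cpair _ _ |- _ => case: (cpair_inj E) => <- <- end;
  eauto.
Qed.

Lemma eval_mu_inv p x y : eval f (PMu p) x y ->
  eval f p (cpair x y) 0 /\ forall z, z < y -> exists w, eval f p (cpair x z) w.+1.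
Proof. by move=> H; inversion H; eauto. Qed.

End EvalInversion.

Lemma eval_det f p x v v' : eval f p x v -> eval f p x v' -> v = v'.
Proof.
move=> H; elim/eval_nested_ind: H v' => {p x v}.
- by move=> x v' /eval_zero_inv.
- by move=> x v' /eval_succ_inv.
- by move=> x v' /eval_id_inv.
- by move=> x v' /eval_fst_inv.
- by move=> x v' /eval_snd_inv.
- by move=> x v e v' /eval_orc_inv; congruence.
- move=> p q x y v _ IHq _ IHp v' /eval_comp_inv [y' [/IHq <- /IHp]] //.
- by move=> p q x a b _ IHp _ IHq v' /eval_pair_inv [a' [b' [/IHp <- /IHq <- ->]]].
- by move=> p q x v _ IH v' /eval_prec_inv /IH.
- by move=> p q x y w v _ IH1 _ IH2 v' /eval_prec_inv [w' [/IH1 <- /IH2]].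
- move=> p x y _ IH0 Hlt v' /eval_mu_inv [H0 Hlt'].
  case: (ltngtP y v') => // [/Hlt' [w /IH0] | /Hlt [w [_ /(_ _ H0)]]] //.
Qed.

Lemma eval_ext f f' p x v : f =1 f' -> eval f p x v -> eval f' p x v.
Proof.
move=> ff' H; elim/eval_nested_ind: H => {p x v}; try by intros; econstructor; eauto.
- by move=> x v e; constructor; rewrite -ff'.
- by move=> p x y _ IH H; constructor => // z /H [w [_ ?]]; exists w.
Qed.

(** * Basic programs and a language of total expressions *)

Fixpoint pconst n := if n is n'.+1 then PComp PSucc (pconst n') else PZero.
Definition pifz (pc pa pb : prog) := PComp (PPrec pa (PComp pb PFst)) (PPair PId pc).
Definition piter (pb ps : prog) := PPrec pb (PComp ps (PComp PSnd PSnd)).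
Definition ppred := PComp (PPrec PZero (PComp PFst PSnd)) (PPair PZero PId).
Definition psub := piter PId ppred.
Definition peq :=
  pifz psub (pifz (PComp psub (PPair PSnd PFst)) (pconst 1) PZero) PZero.

Section BasicPrograms.
Variable f : pfun.

Lemma eval_pconst n x : eval f (pconst n) x n.
Proof. by elim: n => [|n IH] /=; [constructor | apply: EComp IH _; constructor]. Qed.

Lemma eval_piter pb ps B S x y :
  (forall x, eval f pb x (B x)) -> (forall w, eval f ps w (S w)) ->
  eval f (piter pb ps) (cpair x y) (iter y S (B x)).
Proof.
move=> Hb Hs; elim: y => [|y IH]; first exact: EPrec0.
apply: EPrecS IH _; apply: EComp (Hs _); apply: EComp; first exact: ESnd.
by have := ESnd f (cpair y (iter y S (B x))); rewrite !cpairK.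
Qed.

Lemma eval_pifz pc pa pb x c a b : eval f pc x c -> eval f pa x a -> eval f pb x b ->
  eval f (pifz pc pa pb) x (if c is 0 then a else b).
Proof.
move=> Hc Ha Hb; apply: EComp; first by apply: EPair; [constructor | exact: Hc].
have Hfst y : eval f (PComp pb PFst) (cpair x y) b.
  by apply: EComp Hb; have := EFst f (cpair x y); rewrite cpairK.
case: c {Hc} => [|c]; first exact: EPrec0.
have Hc : eval f (PPrec pa (PComp pb PFst)) (cpair x c) (if c is 0 then a else b).
  by elim: c => [|c IH]; [exact: EPrec0 | exact: EPrecS IH (Hfst _)].
exact: EPrecS Hc (Hfst _).
Qed.

Lemma eval_ppred y : eval f ppred y y.-1.
Proof.
apply: (@EComp _ _ _ _ (cpair 0 y)); first by apply: EPair; constructor.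
elim: y => [|y IH]; first by apply: EPrec0; constructor.
apply: EPrecS IH _; apply: EComp; first exact: ESnd.
by have := EFst f (cpair y y.-1); rewrite !cpairK.
Qed.

Lemma eval_psub a b : eval f psub (cpair a b) (a - b).
Proof.
have -> : a - b = iter b predn a by elim: b => [|b /= <-]; rewrite ?subn0 ?subnS.
by apply: eval_piter => [x|w]; [constructor | exact: eval_ppred].
Qed.

Lemma eval_peq a b : eval f peq (cpair a b) (a == b).
Proof.
have Hba : eval f (PComp psub (PPair PSnd PFst)) (cpair a b) (b - a).
  apply: EComp (eval_psub b a).
  by have := EPair (ESnd f (cpair a b)) (EFst f (cpair a b)); rewrite cpairK.
have := eval_pifz (eval_psub a b)
          (eval_pifz Hba (eval_pconst 1 _) (EZero _ _)) (EZero _ _).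
case: (ltngtP a b) => [lt|lt|->]; last by rewrite subnn.
- by rewrite (eqP (ltnW lt)); move: lt; rewrite -subn_gt0; case: (b - a).
- by move: lt; rewrite -subn_gt0; case: (a - b).
Qed.

End BasicPrograms.

Inductive expr : Type :=
| eX | eC of nat | eS of expr | eFst of expr | eSnd of expr | ePair of expr & expr
| eOrc of expr | eComp of expr & expr | eIfz of expr & expr & expr
| eEq of expr & expr | ePred of expr
| eIter of expr & expr & expr.

Fixpoint den (g : nat -> nat) (e : expr) (x : nat) {struct e} : nat :=
  match e with
  | eX => x
  | eC n => n
  | eS a => (den g a x).+1
  | eFst a => (cunpair (den g a x)).1
  | eSnd a => (cunpair (den g a x)).2
  | ePair a b => cpair (den g a x) (den g b x)
  | eOrc a => g (den g a x)
  | eComp a b => den g a (den g b x)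
  | eIfz c a b => if den g c x is 0 then den g a x else den g b x
  | eEq a b => den g a x == den g b x
  | ePred a => (den g a x).-1
  | eIter b s n => iter (den g n x) (den g s) (den g b x)
  end.

Fixpoint compile (e : expr) : prog :=
  match e with
  | eX => PId
  | eC n => pconst n
  | eS a => PComp PSucc (compile a)
  | eFst a => PComp PFst (compile a)
  | eSnd a => PComp PSnd (compile a)
  | ePair a b => PPair (compile a) (compile b)
  | eOrc a => PComp POrc (compile a)
  | eComp a b => PComp (compile a) (compile b)
  | eIfz c a b => pifz (compile c) (compile a) (compile b)
  | eEq a b => PComp peq (PPair (compile a) (compile b))
  | ePred a => PComp ppred (compile a)
  | eIter b s n => PComp (piter (compile b) (compile s)) (PPair PId (compile n))
  end.

Lemma den_eIfz g c a b x :
  den g (eIfz c a b) x = if den g c x is 0 then den g a x else den g b x.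
Proof. by []. Qed.

Lemma den_eComp g a b x : den g (eComp a b) x = den g a (den g b x).
Proof. by []. Qed.

Lemma den_eIter g b s n x : den g (eIter b s n) x = iter (den g n x) (den g s) (den g b x).
Proof. by []. Qed.

Definition pfun_of (g : nat -> nat) : pfun := fun n => Some (g n).

Lemma eval_compile g e x : eval (pfun_of g) (compile e) x (den g e x).
Proof.
elim: e x => /= [x | n x | a IH x | a IH x | a IH x | a IHa b IHb x | a IH x
  | a IHa b IHb x | c IHc a IHa b IHb x | a IHa b IHb x | a IH x | b IHb s IHs n IHn x].
- exact: EId.
- exact: eval_pconst.
- exact: EComp (IH x) (ESucc _ _).
- exact: EComp (IH x) (EFst _ _).
- exact: EComp (IH x) (ESnd _ _).
- exact: EPair.
- exact: EComp (IH x) (EOrc _).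
- exact: EComp (IHb x) (IHa _).
- exact: eval_pifz.
- exact: EComp (EPair (IHa x) (IHb x)) (eval_peq _ _ _).
- exact: EComp (IH x) (eval_ppred _ _).
- exact: EComp (EPair (EId _ x) (IHn x)) (eval_piter _ _ IHb IHs).
Qed.

(** * A universal program *)

(* Codes are only ever decoded with [cpairK]: letting [simpl] unfold the
   arithmetic of [cpair] makes it blow up. *)
Opaque cpair.

Fixpoint code (p : prog) : nat :=
  match p with
  | PZero => cpair 0 0
  | PSucc => cpair 1 0
  | PId => cpair 2 0
  | PFst => cpair 3 0
  | PSnd => cpair 4 0
  | POrc => cpair 5 0
  | PComp p q => cpair 6 (cpair (code p) (code q))
  | PPair p q => cpair 7 (cpair (code p) (code q))
  | PPrec p q => cpair 8 (cpair (code p) (code q))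
  | PMu p => cpair 9 (code p)
  end.

(* Configurations of a small-step machine: [cfg_eval pc x k] runs the program
   coded by [pc] on [x] under the continuation [k], a stack of frames, and
   [cfg_ret v k] returns [v] to [k]. A frame records what to do with the
   returned value: run [p] on it, run [q] on [x] then pair, pair [a] with it,
   continue a recursion on [x] whose stage [i] it is (up to [y]), or, being the
   value of [p] at [<x, y>], end or continue the search for a zero of [p]. *)
Definition cfg_eval pc x k := cpair 0 (cpair pc (cpair x k)).
Definition cfg_ret v k := cpair 1 (cpair v k).
Definition knil := cpair 0 0.
Definition kcons fr k := cpair 1 (cpair fr k).
Definition fr_comp p := cpair 0 p.
Definition fr_pair1 q x := cpair 1 (cpair q x).
Definition fr_pair2 a := cpair 2 a.
Definition fr_prec q x i y := cpair 3 (cpair q (cpair x (cpair i y))).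
Definition fr_mu p x y := cpair 4 (cpair p (cpair x y)).

Definition ecfg_eval pc x k := ePair (eC 0) (ePair pc (ePair x k)).
Definition ecfg_ret v k := ePair (eC 1) (ePair v k).
Definition ekcons fr k := ePair (eC 1) (ePair fr k).
Definition efr_comp p := ePair (eC 0) p.
Definition efr_pair1 q x := ePair (eC 1) (ePair q x).
Definition efr_pair2 a := ePair (eC 2) a.
Definition efr_prec q x i y := ePair (eC 3) (ePair q (ePair x (ePair i y))).
Definition efr_mu p x y := ePair (eC 4) (ePair p (ePair x y)).

Fixpoint eselect (t : expr) (i : nat) (bs : seq expr) (d : expr) : expr :=
  if bs is b :: bs' then eIfz (eEq t (eC i)) (eselect t i.+1 bs' d) b else d.

Lemma den_eselect g t i bs d x : den g (eselect t i bs d) x =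
  if i <= den g t x < i + size bs then den g (nth d bs (den g t x - i)) x
  else den g d x.
Proof.
set T := den g t x; elim: bs i => [|b bs IH] i.
  by rewrite [LHS]/= addn0; case: leqP => //= h; rewrite ltnNge h.
rewrite [LHS]/= IH -/T; case: eqP => [->|ne] /=.
  by rewrite leqnn subnn addnS ltnS leq_addr.
case: (ltngtP T i) => [//|gt|eq]; last by case: ne.
by rewrite addSnnS subnS; move: gt; rewrite -subn_gt0; case: (T - i).
Qed.

Section StepExpression.

Let ePc := eFst (eSnd eX).
Let eArg := eFst (eSnd (eSnd eX)).
Let eK := eSnd (eSnd (eSnd eX)).
Let eTag := eFst ePc.
Let eSub := eSnd ePc.

(* Branch [i] handles the program with code tag [i] (see [code]). *)
Definition eval_branches := [::
  ecfg_ret (eC 0) eK; ecfg_ret (eS eArg) eK; ecfg_ret eArg eK; ecfg_ret (eFst eArg) eK;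
  ecfg_ret (eSnd eArg) eK; ecfg_ret (eOrc eArg) eK;
  ecfg_eval (eSnd eSub) eArg (ekcons (efr_comp (eFst eSub)) eK);
  ecfg_eval (eFst eSub) eArg (ekcons (efr_pair1 (eSnd eSub) eArg) eK);
  ecfg_eval (eFst eSub) (eFst eArg)
    (ekcons (efr_prec (eSnd eSub) (eFst eArg) (eC 0) (eSnd eArg)) eK);
  ecfg_eval eSub (ePair eArg (eC 0)) (ekcons (efr_mu eSub eArg (eC 0)) eK)].

Let eVal := eFst (eSnd eX).
Let eStack := eSnd (eSnd eX).
Let eFrame := eFst (eSnd eStack).
Let eK' := eSnd (eSnd eStack).
Let eData := eSnd eFrame.
Let eFq := eFst eData.
Let eFx := eFst (eSnd eData).
Let eFi := eFst (eSnd (eSnd eData)).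
Let eFy := eSnd (eSnd (eSnd eData)).
Let eMy := eSnd (eSnd eData).

Definition return_branches := [::
  ecfg_eval eData eVal eK';
  ecfg_eval (eFst eData) (eSnd eData) (ekcons (efr_pair2 eVal) eK');
  ecfg_ret (ePair eData eVal) eK';
  eIfz (eEq eFi eFy)
    (ecfg_eval eFq (ePair eFx (ePair eFi eVal)) (ekcons (efr_prec eFq eFx (eS eFi) eFy) eK'))
    (ecfg_ret eVal eK');
  eIfz eVal (ecfg_ret eMy eK')
    (ecfg_eval eFq (ePair eFx (eS eMy)) (ekcons (efr_mu eFq eFx (eS eMy)) eK'))].

Definition eval_case := eselect eTag 0 eval_branches eX.
Definition return_case := eselect (eFst eFrame) 0 return_branches eX.
Definition estep := eIfz (eFst eX) eval_case (eIfz (eFst eStack) eX return_case).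

End StepExpression.

Definition step g := den g estep.

Section Steps.
Variable g : nat -> nat.

Lemma step_eval pc x k : step g (cfg_eval pc x k) =
  if (cunpair pc).1 < 10 then den g (nth eX eval_branches (cunpair pc).1) (cfg_eval pc x k)
  else cfg_eval pc x k.
Proof.
rewrite /step /estep den_eIfz [den g (eFst eX) _]/= /cfg_eval cpairK.
by rewrite /eval_case den_eselect [den g (eFst _) _]/= !cpairK subn0.
Qed.

Lemma step_ret_case v k :
  step g (cfg_ret v k) =
  if (cunpair k).1 is 0 then cfg_ret v k else den g return_case (cfg_ret v k).
Proof.
rewrite /step /estep den_eIfz [den g (eFst eX) _]/= /cfg_ret cpairK; cbn [fst snd].
by rewrite den_eIfz [den g (eFst _) _]/= !cpairK.
Qed.

Lemma step_ret fr v k : step g (cfg_ret v (kcons fr k)) =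
  if (cunpair fr).1 < 5 then den g (nth eX return_branches (cunpair fr).1) (cfg_ret v (kcons fr k))
  else cfg_ret v (kcons fr k).
Proof.
rewrite step_ret_case /kcons cpairK /return_case den_eselect.
by rewrite [den g (eFst _) _]/= /cfg_ret !cpairK subn0.
Qed.

Ltac step_eval_tac := rewrite step_eval [code _]/= cpairK; cbn -[cpair cunpair];
  rewrite /cfg_eval /cfg_ret /kcons /fr_comp /fr_pair1 /fr_prec /fr_mu !cpairK /=.
Ltac step_ret_tac := rewrite /kcons step_ret /fr_comp /fr_pair1 /fr_pair2 /fr_prec /fr_mu
  cpairK; cbn -[cpair cunpair]; rewrite /cfg_eval /cfg_ret /kcons !cpairK /=.

Lemma step_zero x k : step g (cfg_eval (code PZero) x k) = cfg_ret 0 k.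
Proof. by step_eval_tac. Qed.

Lemma step_succ x k : step g (cfg_eval (code PSucc) x k) = cfg_ret x.+1 k.
Proof. by step_eval_tac. Qed.

Lemma step_id x k : step g (cfg_eval (code PId) x k) = cfg_ret x k.
Proof. by step_eval_tac. Qed.

Lemma step_fst x k : step g (cfg_eval (code PFst) x k) = cfg_ret (cunpair x).1 k.
Proof. by step_eval_tac. Qed.

Lemma step_snd x k : step g (cfg_eval (code PSnd) x k) = cfg_ret (cunpair x).2 k.
Proof. by step_eval_tac. Qed.

Lemma step_orc x k : step g (cfg_eval (code POrc) x k) = cfg_ret (g x) k.
Proof. by step_eval_tac. Qed.

Lemma step_comp p q x k :
  step g (cfg_eval (code (PComp p q)) x k) = cfg_eval (code q) x (kcons (fr_comp (code p)) k).
Proof. by step_eval_tac. Qed.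

Lemma step_pair p q x k :
  step g (cfg_eval (code (PPair p q)) x k) = cfg_eval (code p) x (kcons (fr_pair1 (code q) x) k).
Proof. by step_eval_tac. Qed.

Lemma step_prec p q x y k : step g (cfg_eval (code (PPrec p q)) (cpair x y) k) =
  cfg_eval (code p) x (kcons (fr_prec (code q) x 0 y) k).
Proof. by step_eval_tac. Qed.

Lemma step_mu p x k : step g (cfg_eval (code (PMu p)) x k) =
  cfg_eval (code p) (cpair x 0) (kcons (fr_mu (code p) x 0) k).
Proof. by step_eval_tac. Qed.

Lemma step_ret_comp p v k : step g (cfg_ret v (kcons (fr_comp p) k)) = cfg_eval p v k.
Proof. by step_ret_tac. Qed.

Lemma step_ret_pair1 q x v k :
  step g (cfg_ret v (kcons (fr_pair1 q x) k)) = cfg_eval q x (kcons (fr_pair2 v) k).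
Proof. by step_ret_tac. Qed.

Lemma step_ret_pair2 a v k : step g (cfg_ret v (kcons (fr_pair2 a) k)) = cfg_ret (cpair a v) k.
Proof. by step_ret_tac. Qed.

Lemma step_ret_prec_done q x y v k : step g (cfg_ret v (kcons (fr_prec q x y y) k)) = cfg_ret v k.
Proof. by step_ret_tac; rewrite eqnE eqxx. Qed.

Lemma step_ret_prec q x i y v k : i != y ->
  step g (cfg_ret v (kcons (fr_prec q x i y) k)) =
  cfg_eval q (cpair x (cpair i v)) (kcons (fr_prec q x i.+1 y) k).
Proof. by move=> /negbTE ne; step_ret_tac; rewrite eqnE ne. Qed.

Lemma step_ret_mu0 p x y k : step g (cfg_ret 0 (kcons (fr_mu p x y) k)) = cfg_ret y k.
Proof. by step_ret_tac. Qed.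

Lemma step_ret_muS p x y w k : step g (cfg_ret w.+1 (kcons (fr_mu p x y) k)) =
  cfg_eval p (cpair x y.+1) (kcons (fr_mu p x y.+1) k).
Proof. by step_ret_tac. Qed.

End Steps.

Definition reach g c c' := exists n, iter n (step g) c = c'.

Lemma reach_refl g c : reach g c c.
Proof. by exists 0. Qed.

Lemma reach_trans g a b c : reach g a b -> reach g b c -> reach g a c.
Proof. by move=> [n <-] [m <-]; exists (m + n); rewrite iterD. Qed.

Lemma reach_step g a b c : step g a = b -> reach g b c -> reach g a c.
Proof. by move=> E [m <-]; exists (m + 1); rewrite iterD /= E. Qed.

(* The second conjunct follows a primitive recursion from inside its loop
   frame; it is the induction hypothesis that [EPrecS] needs. *)
Lemma machine_simulates g p x v : eval (pfun_of g) p x v ->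
  (forall k, reach g (cfg_eval (code p) x k) (cfg_ret v k)) /\
  (forall p1 q1 k y', p = PPrec p1 q1 -> (cunpair x).2 <= y' ->
     let x1 := (cunpair x).1 in
     reach g (cfg_eval (code p1) x1 (kcons (fr_prec (code q1) x1 0 y') k))
             (cfg_ret v (kcons (fr_prec (code q1) x1 (cunpair x).2 y') k))).
Proof.
have reach1 c c' : step g c = c' -> reach g c c'.
  by move=> E; apply: reach_step E (reach_refl _ _).
elim/eval_nested_ind => {p x v}.
- by split=> // k; apply/reach1/step_zero.
- by split=> // k; apply/reach1/step_succ.
- by split=> // k; apply/reach1/step_id.
- by split=> // k; apply/reach1/step_fst.
- by split=> // k; apply/reach1/step_snd.
- by move=> x v [<-]; split=> // k; apply/reach1/step_orc.
- move=> p q x y v _ [IHq _] _ [IHp _]; split=> // k.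
  apply: reach_step (step_comp _ _ _ _ _) _; apply: reach_trans (IHq _) _.
  exact: reach_step (step_ret_comp _ _ _ _) (IHp _).
- move=> p q x a b _ [IHp _] _ [IHq _]; split=> // k.
  apply: reach_step (step_pair _ _ _ _ _) _; apply: reach_trans (IHp _) _.
  apply: reach_step (step_ret_pair1 _ _ _ _ _) _; apply: reach_trans (IHq _) _.
  exact/reach1/step_ret_pair2.
- move=> p q x v _ [IHp _]; split=> [k | p1 q1 k y' [<- <-]]; rewrite ?cpairK //=.
  apply: reach_step (step_prec _ _ _ _ _ _) _; apply: reach_trans (IHp _) _.
  exact/reach1/step_ret_prec_done.
- move=> p q x y w v _ [_ IH1] _ [IH2 _].
  have Hloop k y' : y < y' ->
      reach g (cfg_eval (code p) x (kcons (fr_prec (code q) x 0 y') k))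
              (cfg_ret v (kcons (fr_prec (code q) x y.+1 y') k)).
    move=> lt; have := IH1 _ _ k y' erefl; rewrite cpairK => /(_ (ltnW lt)) Hy.
    apply: reach_trans Hy _; apply: reach_step (step_ret_prec _ _ _ _ _ _) (IH2 _).
    by rewrite neq_ltn lt.
  split=> [k | p1 q1 k y' [<- <-]]; rewrite ?cpairK; last exact: Hloop.
  apply: reach_step (step_prec _ _ _ _ _ _) _; apply: reach_trans (Hloop _ _ (ltnSn y)) _.
  exact/reach1/step_ret_prec_done.
- move=> p x y _ [IH0 _] Hlt; split=> // k.
  apply: reach_step (step_mu _ _ _ _) _.
  have Hsearch i : i <= y ->
      reach g (cfg_eval (code p) (cpair x 0) (kcons (fr_mu (code p) x 0) k))
              (cfg_eval (code p) (cpair x i) (kcons (fr_mu (code p) x i) k)).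
    elim: i => [|i IH] hi; first exact: reach_refl.
    apply: reach_trans (IH (ltnW hi)) _.
    have [w [_ [IHw _]]] := Hlt _ hi.
    exact: reach_trans (IHw _) (reach1 _ _ (step_ret_muS _ _ _ _ _ _)).
  apply: reach_trans (Hsearch _ (leqnn y)) _; apply: reach_trans (IH0 _) _.
  exact/reach1/step_ret_mu0.
Qed.

Lemma machine_run g p x v : eval (pfun_of g) p x v ->
  reach g (cfg_eval (code p) x knil) (cfg_ret v knil).
Proof. by move=> /machine_simulates []. Qed.

Definition halted c := ((cunpair c).1 != 0) && ((cunpair (cunpair (cunpair c).2).2).1 == 0).

Lemma step_halted g c : halted c -> step g c = c.
Proof.
move=> /andP [Hret Hnil]; rewrite /step /estep den_eIfz [den g (eFst eX) c]/=.
case: ((cunpair c).1) Hret => // _ _.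
by rewrite den_eIfz [den g (eFst _) c]/= (eqP Hnil).
Qed.

Definition einit := ecfg_eval (eFst eX) (eSnd eX) (eC knil).
Definition erun := eIter (eComp einit (eFst eX)) estep (eSnd eX).
Definition erunning := eIfz (eFst eX) (eC 1) (eIfz (eFst (eSnd (eSnd eX))) (eC 0) (eC 1)).

(* [puniv] on [<c, x>] searches the least [t] such that the machine started
   on [cfg_eval c x knil] has halted after [t] steps and outputs its value. *)
Definition puniv := PComp (compile (eComp (eFst (eSnd eX)) erun))
  (PPair PId (PMu (compile (eComp erunning erun)))).

Lemma den_erun g z t : den g erun (cpair z t) = iter t (step g) (den g einit z).
Proof. by rewrite den_eIter den_eComp [den g (eSnd _) _]/= [den g (eFst _) _]/= !cpairK. Qed.

Lemma den_erunning g c : den g erunning c = ~~ halted c.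
Proof.
rewrite /halted /=; case: ((cunpair c).1) => //= _.
by case: ((cunpair (cunpair (cunpair c).2).2).1).
Qed.

Lemma eval_puniv g p x v : eval (pfun_of g) p x v ->
  eval (pfun_of g) puniv (cpair (code p) x) v.
Proof.
move=> /machine_run [n Hn]; set z := cpair (code p) x.
have Hinit : den g einit z = cfg_eval (code p) x knil by rewrite /= !cpairK.
have halted_ret : halted (cfg_ret v knil) by rewrite /halted /cfg_ret /knil !cpairK.
have exH : exists t, halted (iter t (step g) (den g einit z)) by exists n; rewrite Hinit Hn.
case: (ex_minnP exH) => t Ht Hmin.
have Hval : iter t (step g) (den g einit z) = cfg_ret v knil.
  have le : t <= n by apply: Hmin; rewrite Hinit Hn.
  rewrite -Hn -Hinit -(subnK le) iterD [RHS]iter_fix //; exact: step_halted.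
have Hrunning s :
    den g (eComp erunning erun) (cpair z s) = ~~ halted (iter s (step g) (den g einit z)).
  by rewrite -(den_erunning g) -den_erun.
apply: (EComp (y := cpair z t)).
  apply: EPair (EId _ _) (EMu _ _) => [|s lt].
    by have := eval_compile g (eComp erunning erun) (cpair z t); rewrite Hrunning Ht.
  have := eval_compile g (eComp erunning erun) (cpair z s); rewrite Hrunning.
  suff -> : halted (iter s (step g) (den g einit z)) = false by exists 0.
  by apply/negbTE/negP => /Hmin; rewrite leqNgt lt.
have := eval_compile g (eComp (eFst (eSnd eX)) erun) (cpair z t).
by rewrite den_eComp den_erun Hval [den g _ _]/= /cfg_ret !cpairK.
Qed.

Lemma diagonal_undecidable g D : (forall e, exists v, eval (pfun_of g) D e v) ->
  ~ (forall e, eval (pfun_of g) D e 0 <-> ~ eval (pfun_of g) puniv (cpair e e) 0).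
Proof.
move=> Dtot HD; have [v Hv] := Dtot (code D); have HU := eval_puniv Hv.
case: v Hv HU => [|v] Hv HU; first exact: (HD (code D)).1 Hv HU.
have notD0 : ~ eval (pfun_of g) D (code D) 0 by move=> /(eval_det Hv).
by apply: notD0; apply/HD => /(eval_det HU).
Qed.

(** * Substituting a program for the oracle *)

Fixpoint subst (p r : prog) : prog :=
  match p with
  | POrc => r
  | PComp a b => PComp (subst a r) (subst b r)
  | PPair a b => PPair (subst a r) (subst b r)
  | PPrec a b => PPrec (subst a r) (subst b r)
  | PMu a => PMu (subst a r)
  | _ => p
  end.

Section Subst.
Variables (o f : pfun) (G : nat -> nat) (r : prog).
Hypotheses (oG : forall j, o j = Some (G j)) (rG : forall j, eval f r j (G j)).

Lemma eval_subst p x v : eval o p x v -> eval f (subst p r) x v.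
Proof.
elim/eval_nested_ind => {p x v}; try by intros; econstructor; eauto.
- by move=> x v; rewrite oG => -[<-].
- by move=> p x y _ IH H; constructor => // z /H [w [_ ?]]; exists w.
Qed.

Lemma eval_subst_inv p x v : eval f (subst p r) x v -> eval o p x v.
Proof.
have orc y w : eval f r y w -> eval o POrc y w.
  by move=> /(eval_det (rG y)) <-; constructor; rewrite oG.
move Eq: (subst p r) => q H; elim/eval_nested_ind: H p Eq => {q x v}.
- by move=> x [] //= => [_|E]; [constructor | apply: orc; rewrite E; constructor].
- by move=> x [] //= => [_|E]; [constructor | apply: orc; rewrite E; constructor].
- by move=> x [] //= => [_|E]; [constructor | apply: orc; rewrite E; constructor].
- by move=> x [] //= => [_|E]; [constructor | apply: orc; rewrite E; constructor].
- by move=> x [] //= => [_|E]; [constructor | apply: orc; rewrite E; constructor].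
- by move=> x v e [] //= E; apply: orc; rewrite E; constructor.
- move=> p q x y v H1 IH1 H2 IH2 [] //= => [E | a b [Ea Eb]].
  + by apply: orc; rewrite E; apply: EComp H1 H2.
  + exact: EComp (IH1 _ Eb) (IH2 _ Ea).
- move=> p q x a b H1 IH1 H2 IH2 [] //= => [E | a' b' [Ea Eb]].
  + by apply: orc; rewrite E; apply: EPair H1 H2.
  + exact: EPair (IH1 _ Ea) (IH2 _ Eb).
- move=> p q x v H1 IH1 [] //= => [E | a b [Ea Eb]].
  + by apply: orc; rewrite E; apply: EPrec0 H1.
  + exact: EPrec0 (IH1 _ Ea).
- move=> p q x y w v H1 IH1 H2 IH2 [] //= => [E | a b [Ea Eb]].
  + by apply: orc; rewrite E; apply: EPrecS H1 H2.
  + by apply: EPrecS (IH1 (PPrec a b) _) (IH2 _ Eb); rewrite /= Ea Eb.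
- move=> p x y H0 IH0 Hlt [] //= => [E | a [Ea]].
  + apply: orc; rewrite E; apply: EMu H0 _ => z /Hlt [w [? _]]; by exists w.
  + apply: EMu (IH0 _ Ea) _ => z /Hlt [w [_ IHw]]; by exists w; apply: IHw.
Qed.

End Subst.

Inductive tprog : Type :=
| THole | TEmb of prog | TComp of tprog & tprog | TPair of tprog & tprog
| TPrec of tprog & tprog | TMu of tprog.

Fixpoint inst (t : tprog) (r : prog) : prog :=
  match t with
  | THole => r
  | TEmb p => p
  | TComp a b => PComp (inst a r) (inst b r)
  | TPair a b => PPair (inst a r) (inst b r)
  | TPrec a b => PPrec (inst a r) (inst b r)
  | TMu a => PMu (inst a r)
  end.

Fixpoint tsubst (p : prog) (t : tprog) : tprog :=
  match p with
  | POrc => t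
  | PComp a b => TComp (tsubst a t) (tsubst b t)
  | PPair a b => TPair (tsubst a t) (tsubst b t)
  | PPrec a b => TPrec (tsubst a t) (tsubst b t)
  | PMu a => TMu (tsubst a t)
  | _ => TEmb p
  end.

Fixpoint etcode (t : tprog) : expr :=
  match t with
  | THole => eX
  | TEmb p => eC (code p)
  | TComp a b => ePair (eC 6) (ePair (etcode a) (etcode b))
  | TPair a b => ePair (eC 7) (ePair (etcode a) (etcode b))
  | TPrec a b => ePair (eC 8) (ePair (etcode a) (etcode b))
  | TMu a => ePair (eC 9) (etcode a)
  end.

Lemma inst_tsubst p t r : inst (tsubst p t) r = subst p (inst t r).
Proof. by elim: p => //= [a -> b ->|a -> b ->|a -> b ->|a ->]. Qed.

Lemma den_etcode g t r : den g (etcode t) (code r) = code (inst t r).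
Proof. by elim: t => //= [a -> b ->|a -> b ->|a -> b ->|a ->]. Qed.

Definition ehalf_odd := eIter (eC (cpair 0 0))
  (eIfz (eSnd eX) (ePair (eFst eX) (eC 1)) (ePair (eS (eFst eX)) (eC 0))) eX.
Definition phalf := PComp PFst (compile ehalf_odd).
Definition pparity := PComp PSnd (compile ehalf_odd).

Lemma den_ehalf_odd g y : den g ehalf_odd y = cpair y./2 (odd y).
Proof.
rewrite den_eIter /=; elim: y => [|y IH] //=; rewrite IH !cpairK /= uphalf_half.
by case: (odd y); rewrite ?add0n ?add1n.
Qed.

(* [inst (tjoin a) b] is [pifz pparity (PComp a phalf) (PComp b phalf)]. *)
Definition tjoin (a : prog) : tprog :=
  TComp (TPrec (TEmb (PComp a phalf)) (TComp (TComp THole (TEmb phalf)) (TEmb PFst)))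
        (TPair (TEmb PId) (TEmb pparity)).

Lemma eval_join g a b A B :
  (forall n, eval (pfun_of g) a n (A n)) -> (forall n, eval (pfun_of g) b n (B n)) ->
  forall j, eval (pfun_of g) (inst (tjoin a) b) j (if odd j then B j./2 else A j./2).
Proof.
move=> Ha Hb j.
have HP := eval_compile g ehalf_odd j; rewrite den_ehalf_odd in HP.
have Hhalf : eval (pfun_of g) phalf j j./2 by have := EComp HP (EFst _ _); rewrite cpairK.
have Hpar : eval (pfun_of g) pparity j (odd j) by have := EComp HP (ESnd _ _); rewrite cpairK.
have := eval_pifz Hpar (EComp Hhalf (Ha _)) (EComp Hhalf (Hb _)).
by case: (odd j).
Qed.

Lemma eval_subst_join g A B K a b p :
  (forall n, eval (pfun_of g) a n (A n)) -> (forall n, eval (pfun_of g) b n (B n)) ->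
  (forall n, eval (pjoin (pfun_of A) (pfun_of B)) p n (K n)) ->
  forall n, eval (pfun_of g) (subst p (inst (tjoin a) b)) n (K n).
Proof.
move=> Ha Hb Hp n; apply: (eval_subst _ (eval_join Ha Hb)) (Hp n) => j.
by rewrite /pjoin; case: (odd j).
Qed.


(** * Indices and the two partial combinatory algebras *)

Lemma Phi_pickle p f n v : Phi (pickle p) f n v <-> eval f p n v.
Proof. by rewrite /Phi pickleK; split=> [[q [[<-]]] | H] //; exists p. Qed.

Lemma pcomputable_total X q G :
  (forall n, eval (chi X) q n (G n)) -> pcomputable X (pfun_of G).
Proof.
move=> H; exists (pickle q) => n v; rewrite Phi_pickle.
by rewrite /pfun_of; split=> [[<-] | /(eval_det (H n)) ->].
Qed.

Lemma pcomputable_ext X a a' : a =1 a' -> pcomputable X a -> pcomputable X a'.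
Proof. by move=> E [e He]; exists e => n v; rewrite -E. Qed.

Definition undef : pfun := fun _ => None.

Lemma pcomputable_undef X : pcomputable X undef.
Proof.
exists (pickle (PMu (pconst 1))) => n v; rewrite Phi_pickle; split=> //.
by move=> /eval_mu_inv [/eval_comp_inv [y [_ /eval_succ_inv]]].
Qed.

Lemma tcomputable_prog X G : tcomputable X G -> exists q, forall n, eval (chi X) q n (G n).
Proof.
case=> e H; have [q [Hq _]] := H 0; exists q => n.
by have [q' [Hq' Hn]] := H n; move: Hq'; rewrite Hq => -[->].
Qed.

Lemma K2app_index g h k : K2app g h k -> exists p : prog, unpickle (g 0) = Some p.
Proof. by move=> /(_ 0) [q [Hq _]]; exists q. Qed.

Lemma K2app_eval g h k p : K2app g h k -> unpickle (g 0) = Some p ->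
  forall n, eval (pjoin (pfun_of g) (pfun_of h)) p n (k n).
Proof. by move=> H Hp n; have [q [Hq Hn]] := H n; move: Hq; rewrite Hp => -[->]. Qed.

Lemma Bapp_prog (a b c : pfun) p : a 0 = Some (pickle p) ->
  (forall n v, c n = Some v <-> eval (pjoin a b) p n v) -> Bapp a b c.
Proof.
move=> Ha H n v; rewrite H Ha; split=> [Hv | [e [[<-] /Phi_pickle]]] //.
by exists (pickle p); split=> //; apply/Phi_pickle.
Qed.

Definition const e : pfun := fun _ => Some e.

Lemma pcomputable_const X e : pcomputable X (const e).
Proof. exact: (@pcomputable_total X (pconst e) (fun _ => e) (eval_pconst _ e)). Qed.

(* The program of an applicand [a] reads the argument [b] at odd places of
   the oracle [a (+) b]; [pread_arg] reads [b 0]. *)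
Definition pread_arg := PComp POrc (pconst 1).
Definition psucc_arg := PComp PSucc pread_arg.
Definition succ_const : pfun := const (pickle psucc_arg).

Lemma eval_pread_arg a e n : eval (pjoin a (const e)) pread_arg n e.
Proof. exact: EComp (eval_pconst _ 1 _) (EOrc _). Qed.

Lemma Bapp_succ_const e : Bapp succ_const (const e) (const e.+1).
Proof.
apply: (@Bapp_prog _ _ _ psucc_arg) => // n v.
have H : eval (pjoin succ_const (const e)) psucc_arg n e.+1.
  exact: EComp (eval_pread_arg _ _ _) (ESucc _ _).
by split=> [[<-] | /(eval_det H) <-].
Qed.

Definition etwice_succ := eIter (eC 2) (eS (eS eX)) eX.
Definition pshift := PComp POrc (compile etwice_succ).
Definition pdiag := PComp (subst puniv pshift) (PPair pread_arg pread_arg).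
Definition pdiag_zero := PMu (PComp pdiag PFst).

(* [hdiag X] holds the index of [pdiag_zero] at 0 and [X] from 1 on, so that
   [pshift] reads [X j] at place [2 j + 2] of the oracle [hdiag X (+) b]. *)
Definition hdiag X : pfun :=
  fun j => if j is j'.+1 then Some (nat_of_bool (X j')) else Some (pickle pdiag_zero).

Lemma pcomputable_hdiag X : pcomputable X (hdiag X).
Proof.
pose eH := eIfz eX (eC (pickle pdiag_zero)) (eOrc (ePred eX)).
apply: (@pcomputable_ext _ (pfun_of (den (fun n => X n) eH))); first by case.
exact/pcomputable_total/eval_compile.
Qed.

Section Hdiag.
Variables (X : nat -> bool) (e : nat).
Let o := pjoin (hdiag X) (const e).

Lemma eval_pshift j : eval o pshift j (X j).
Proof.
pose O i := if odd i then e else if i./2 is i'.+1 then nat_of_bool (X i') else pickle pdiag_zero.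
have o_total : pfun_of O =1 o.
  by move=> i; rewrite /o /pjoin /O /pfun_of; case: (odd i) => //; case: (i./2).
apply: EComp (eval_ext o_total (eval_compile _ _ _)) _; apply: EOrc.
have -> : den O etwice_succ j = j.*2.+2.
  by rewrite den_eIter /=; elim: j => //= j ->; rewrite doubleS.
by rewrite /o /pjoin /= odd_double /= doubleK.
Qed.

Lemma eval_pdiag n w : eval o pdiag n w <-> eval (chi X) puniv (cpair e e) w.
Proof.
have chiX j : chi X j = Some (nat_of_bool (X j)) by [].
split.
  move=> /eval_comp_inv [y [/eval_pair_inv [a [b [Ha Hb ->]]]]].
  rewrite -(eval_det (eval_pread_arg _ _ n) Ha) -(eval_det (eval_pread_arg _ _ n) Hb).
  exact: (eval_subst_inv chiX eval_pshift).
move=> H; apply: EComp (EPair (eval_pread_arg _ _ n) (eval_pread_arg _ _ n)) _.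
exact: (eval_subst chiX eval_pshift).
Qed.

Lemma eval_pdiag_zero n v :
  eval o pdiag_zero n v <-> eval (chi X) puniv (cpair e e) 0 /\ v = 0.
Proof.
split.
  move=> /eval_mu_inv [/eval_comp_inv [z [/eval_fst_inv]]].
  rewrite cpairK /= => -> /eval_pdiag H0 Hlt; split=> //.
  case: v Hlt => // v /(_ 0 erefl) [w /eval_comp_inv [z' [/eval_fst_inv]]].
  by rewrite cpairK /= => -> /eval_pdiag /(eval_det H0).
move=> [H0 ->]; apply: EMu => // ; apply: (EComp (y := n)); last exact/eval_pdiag.
by have := EFst o (cpair n 0); rewrite cpairK.
Qed.

End Hdiag.

Lemma Bapp_hdiag X e :
  eval (chi X) puniv (cpair e e) 0 /\ Bapp (hdiag X) (const e) (const 0) \/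
  ~ eval (chi X) puniv (cpair e e) 0 /\ Bapp (hdiag X) (const e) undef.
Proof.
have Bapp_diag b : (forall n v, b n = Some v <-> eval (chi X) puniv (cpair e e) 0 /\ v = 0) ->
    Bapp (hdiag X) (const e) b.
  by move=> Hb; apply: (@Bapp_prog _ _ _ pdiag_zero) => // n v; rewrite Hb eval_pdiag_zero.
case: (classic (eval (chi X) puniv (cpair e e) 0)) => H0; [left | right]; split=> //.
  by apply: Bapp_diag => n v; split=> [[<-] | [_ ->]].
by apply: Bapp_diag => n v; split=> // [[]].
Qed.

(** * An embedding of B^X into K_2^X would decide the diagonal halting set *)

Section Embedding.
Variables (X : nat -> bool) (F : pfun -> nat -> nat).
Hypotheses
  (F_tcomp : forall a, pcomputable X a -> tcomputable X (F a))
  (F_inj : forall a b, pcomputable X a -> pcomputable X b -> F a = F b -> a = b)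
  (F_app : forall a b c, pcomputable X a -> pcomputable X b -> Bapp a b c ->
     K2app (F a) (F b) (F c)).

Let x n := nat_of_bool (X n).

Lemma F_separates : exists m, F (const 0) m <> F undef m.
Proof.
apply: NNPP => H.
have E : F (const 0) = F undef.
  by apply: functional_extensionality => m; apply: NNPP => ne; apply: H; exists m.
by have /(congr1 (@^~ 0)) := F_inj (pcomputable_const X 0) (pcomputable_undef X) E.
Qed.

Lemma F_prog a : pcomputable X a -> exists q, forall n, eval (chi X) q n (F a n).
Proof. by move=> /F_tcomp /tcomputable_prog. Qed.

Lemma F_const_family : exists (L : nat -> prog) (eL : expr),
  (forall e, den x eL e = code (L e)) /\ forall e n, eval (chi X) (L e) n (F (const e) n).
Proof.
have [q0 Hq0] := F_prog (pcomputable_const X 0).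
have [qS HqS] := F_prog (pcomputable_const X (pickle psucc_arg)).
have Fsucc e := F_app (pcomputable_const X _) (pcomputable_const X e) (Bapp_succ_const e).
have [pS HpS] := K2app_index (Fsucc 0).
pose T := tsubst pS (tjoin qS).
exists (fun e => iter e (inst T) q0), (eIter (eC (code q0)) (etcode T) eX); split.
  by move=> e; rewrite den_eIter /=; elim: e => //= e ->; rewrite den_etcode.
elim=> [|e IH] n //=; rewrite inst_tsubst.
exact: eval_subst_join HqS IH (K2app_eval (Fsucc e) HpS) n.
Qed.

Lemma F_hdiag_family : exists (Q : nat -> prog) (eQ : expr),
  (forall e, den x eQ e = code (Q e)) /\
  forall e b, pcomputable X b -> Bapp (hdiag X) (const e) b ->
    forall n, eval (chi X) (Q e) n (F b n).
Proof.
have [L [eL [HeL HL]]] := F_const_family.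
have [qh Hqh] := F_prog (pcomputable_hdiag X).
have Fh e b := F_app (pcomputable_hdiag X) (pcomputable_const X e) (c := b).
have [pH HpH] : exists p : prog, unpickle (F (hdiag X) 0) = Some p.
  by case: (Bapp_hdiag X 0) => [[_ /Fh] | [_ /Fh]]; apply: K2app_index.
pose T := tsubst pH (tjoin qh).
exists (fun e => inst T (L e)), (eComp (etcode T) eL); split=> [e | e b _ Happ n].
  by rewrite den_eComp HeL den_etcode.
rewrite inst_tsubst; exact: eval_subst_join Hqh (HL e) (K2app_eval (Fh e b Happ) HpH) n.
Qed.

Lemma F_decides_diagonal : exists D, (forall e, exists v, eval (chi X) D e v) /\
  forall e, eval (chi X) D e 0 <-> ~ eval (chi X) puniv (cpair e e) 0.
Proof.
have [m Hm] := F_separates.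
have [Q [eQ [HeQ HQ]]] := F_hdiag_family.
pose D := PComp (compile (eEq eX (eC (F (const 0) m))))
                (PComp puniv (PPair (compile eQ) (pconst m))).
have HD e b : pcomputable X b -> Bapp (hdiag X) (const e) b ->
    eval (chi X) D e (F b m == F (const 0) m).
  move=> pb Happ; apply: EComp (eval_compile x _ (F b m)).
  apply: EComp (eval_puniv (HQ e b pb Happ m)).
  by apply: EPair (eval_pconst _ _ _); rewrite -HeQ; apply: eval_compile.
exists D; split=> e; case: (Bapp_hdiag X e) => -[H0 Happ].
- by eexists; apply: HD (pcomputable_const X 0) Happ.
- by eexists; apply: HD (pcomputable_undef X) Happ.
- have := HD e _ (pcomputable_const X 0) Happ; rewrite eqxx => HD1.
  by split=> [/(eval_det HD1) | []].
- have Hne : (F undef m == F (const 0) m) = false by apply/eqP => /esym.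
  by have := HD e _ (pcomputable_undef X) Happ; rewrite Hne => HD0; split.
Qed.

End Embedding.

Theorem corollary6p16 (X : nat -> bool) :
  ~ exists F : pfun -> (nat -> nat),
      [/\ (forall a, pcomputable X a -> tcomputable X (F a)),
          (forall a b, pcomputable X a -> pcomputable X b -> F a = F b -> a = b)
        & (forall a b c, pcomputable X a -> pcomputable X b -> Bapp a b c ->
             K2app (F a) (F b) (F c))].
Proof.
case=> F [F_tcomp F_inj F_app].
have [D [Dtot HD]] := F_decides_diagonal F_tcomp F_inj F_app.
exact: diagonal_undecidable Dtot HD.
Qed.
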